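(* Let $f,g\in R(x)$ and $h=f+g$. Suppose $val(f)=val(g)$ and that there exists $u\in\mathbb{R}^n$ such that for all sufficiently small $\epsilon>0$ we have $val(f(p^{\epsilon u}x))< val(g(p^{\epsilon u}x))$. Then $val(h)=val(f)$ and $lc(h)=lc(f)+lc(g)$.
   Context: Let $F=F(x)$, $x=(x_1,\dots,x_n)$, be the field consisting of $0$ and all formal series $f=\sum_{t\in T} a_t(x) p^t$, where $T\subset\mathbb{R}$ is discrete and bounded from below, the $a_t(x)$ are rational functions of $x$ independent of $p$, and $a_{\min T}\neq 0$; $val(f)=\min T$ and $lc(f)=a_{val(f)}$. For $\epsilon\in\mathbb{R}^n$, $p^{\epsilon}x=(p^{\epsilon_1}x_1,\dots,p^{\epsilon_n}x_n)$. For $r\in\mathbb{C}(x)$, $\deg_\epsilon(r)=val(r(p^\epsilon x))$ and $\deg(r)=-\inf_{\epsilon\ne0}\deg_\epsilon(r)/\|\epsilon\|_\infty$. $R(x)\subset F(x)$ is the subfield of those $f=\sum_t a_tp^t$ with $\inf_{t\in T,\,t>val(f)}\deg(a_t)/(t-val(f))<\infty$; for such $f$ and $\epsilon$ small, $f(p^\epsilon x)$ is the series obtained by substituting $p^\epsilon x$ into each coefficient, expanding in $p$ and summing. *)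

From HB Require Import structures.
From mathcomp Require Import all_boot all_order all_algebra.
From mathcomp Require Import mpoly.
From mathcomp Require Import boolp classical_sets cardinality fsbigop reals constructive_ereal ereal.

Set Implicit Arguments.
Unset Strict Implicit.
Unset Printing Implicit Defensive.
Import Order.TTheory GRing.Theory Num.Theory.
Local Open Scope classical_set_scope.
Local Open Scope ring_scope.

Section PuiseuxLike.
Variables (R : realType) (n : nat) (K : fieldType).

Local Notation Pol := {mpoly K[n]}.
Local Notation RF := {fraction Pol}.

(* a formal series  f = sum_t a_t(x) p^t  is given by its coefficient map t |-> a_t *)
Definition series := R -> RF.

Definition is_series (f : series) : Prop :=
  (exists B : R, forall t, f t != 0 -> B <= t) /\
  (forall B : R, finite_set [set t | f t != 0 /\ t <= B]).

Definition pval (f : series) : \bar R :=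
  ereal_inf [set t%:E | t in [set t | f t != 0]].
Definition lc (f : series) : RF := f (fine (pval f)).

Definition sadd (f g : series) : series := fun t => f t + g t.

(* Cauchy product of series (finite sums for genuine series) *)
Definition smul (f g : series) : series :=
  fun s => \sum_(t \in [set t | f t != 0]) (f t * g (s - t)).

Definition dotm (e : 'I_n -> R) (m : 'X_{1..n}) : R :=
  \sum_(i < n) e i * (m i)%:R.

(* P(p^eps x) for a polynomial P, as a (finite) series *)
Definition psubst (e : 'I_n -> R) (q : Pol) : series :=
  fun s => tofrac (\sum_(m <- msupp q | dotm e m == s) (q@_m *: 'X_[m])).

(* r(p^eps x) for r = P/Q in K(x): the series S in F with S * Q(p^eps x) = P(p^eps x) *)
Definition rsubst (e : 'I_n -> R) (r : RF) : series :=
  xget (fun _ => 0) [set S : series | is_series S /\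
     exists p q : Pol, q != 0 /\ r = tofrac p / tofrac q /\ smul S (psubst e q) = psubst e p].

(* f(p^eps x): substitute in each coefficient, expand in p, and sum *)
Definition subst (e : 'I_n -> R) (f : series) : series :=
  fun s => \sum_(t \in [set t | f t != 0]) rsubst e (f t) (s - t).

Definition deg_eps (e : 'I_n -> R) (r : RF) : \bar R := pval (rsubst e r).

Definition norminf (e : 'I_n -> R) : R := \big[Num.max/0]_(i < n) `|e i|.

Definition deg (r : RF) : \bar R :=
  (- ereal_inf [set (deg_eps e r * ((norminf e)^-1)%R%:E)%E
                | e in [set e : 'I_n -> R | exists i, e i != 0%R]])%E.

Definition in_Rx (f : series) : Prop :=
  is_series f /\
  (ereal_sup [set (deg (f t) * ((t - fine (pval f))^-1)%R%:E)%E
              | t in [set t | f t != 0%R /\ (pval f < t%:E)%E]] < +oo)%E.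

End PuiseuxLike.

From HB Require Import structures.
From mathcomp Require Import all_boot all_order all_algebra.
From mathcomp Require Import mpoly.
From mathcomp Require Import boolp classical_sets cardinality fsbigop reals constructive_ereal ereal.
From mathcomp Require Import lra.
Import Order.TTheory GRing.Theory Num.Theory.
Local Open Scope ring_scope.

(* If the leading coefficients cancelled, write f_v = P/Q, so that g_v = -P/Q.  For
   r = P/Q the series r(p^e x) has valuation w_e(P) - w_e(Q), where w_e is the least
   e-weight of a monomial; this requires the quotient series, which is constructed
   coefficient by coefficient.  Membership in R(x) bounds the valuations of the higher
   terms a_t(p^(eps u) x) p^t, t > v, from below by t - M eps (t - v), and these exponents
   t stay at distance c > 0 from v; so for small eps the leading term alone determines
   the valuation, and f(p^(eps u) x) and g(p^(eps u) x) both have valuation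
   v + eps (w_u(P) - w_u(Q)), contradicting the hypothesis. *)

Set Implicit Arguments.
Unset Strict Implicit.
Unset Printing Implicit Defensive.
Local Open Scope classical_set_scope.

Section PuiseuxValuation.
Variables (R : realType) (n : nat) (K : fieldType).
Local Notation Pol := {mpoly K[n]}.
Local Notation RF := {fraction Pol}.
Local Notation series := (series R n K).
Implicit Types (S T h : series) (e u : 'I_n -> R) (p q : Pol) (r : RF).

Lemma seq_has_min (s : seq R) x : x \in s ->
  exists2 y, y \in s & forall z, z \in s -> y <= z.
Proof.
move=> xs; exists (\big[Num.min/x]_(z <- s) z).
  rewrite big_seq; apply: (big_ind (fun y => y \in s)) => // a b ha hb.
  by rewrite /Order.min; case: ifP.
by move=> z zs; apply: ge_bigmin_seq.
Qed.

Lemma finite_set_has_min (A : set R) x : finite_set A -> A x ->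
  exists2 y, A y & forall z, A z -> y <= z.
Proof.
move=> fA Ax; pose s := finmap.enum_fset (fset_set A).
have memA z : (z \in s) = (z \in A) by rewrite in_fset_set.
have [|y] := @seq_has_min s x; first by rewrite memA inE.
by rewrite memA inE => Ay hy; exists y => // z Az; apply: hy; rewrite memA inE.
Qed.

Lemma pval_le S t : S t != 0 -> (pval S <= t%:E)%E.
Proof. by move=> St; apply: ereal_inf_lbound; exists t. Qed.

Lemma pval_ge S b : (forall t, S t != 0 -> b <= t) -> (b%:E <= pval S)%E.
Proof. by move=> hb; apply: le_ereal_inf_tmp => _ [t /hb bt <-]; rewrite lee_fin. Qed.

Lemma pval_min S s : S s != 0 -> (forall t, S t != 0 -> s <= t) -> pval S = s%:E.
Proof. by move=> Ss hs; apply/le_anti; rewrite pval_le // pval_ge. Qed.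

Lemma pval_infty S : pval S = +oo%E <-> forall t, S t = 0.
Proof.
split=> [S0 t|S0].
  by apply: contra_eq S0 => /pval_le le; apply: contraTneq le => ->; rewrite leye_eq.
by apply/le_anti; rewrite leey /=; apply: le_ereal_inf_tmp => y [t /=]; rewrite S0 eqxx.
Qed.

Lemma series_has_min S t0 : is_series S -> S t0 != 0 ->
  exists2 s, S s != 0 & forall t, S t != 0 -> s <= t.
Proof.
move=> [_ fin] St0.
have [s [Ss st0] hs] := finite_set_has_min (fin t0) (conj St0 (lexx t0)).
exists s => // t St; case: (leP t t0) => [tt0|/ltW]; [exact: hs | exact: le_trans].
Qed.

Lemma pval_finite_or_infty S : is_series S -> pval S = +oo%E \/ exists v, pval S = v%:E.
Proof.
move=> [[B Bmin] _]; case ES: (pval S) => [v| |]; [by right; exists v | by left |].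
have : (B%:E <= -oo)%E by rewrite -ES; apply: pval_ge Bmin.
by rewrite leeNy_eq => /eqP BNy; exfalso; discriminate BNy.
Qed.

Lemma pval_attained S v : is_series S -> pval S = v%:E ->
  S v != 0 /\ forall t, S t != 0 -> v <= t.
Proof.
move=> iS Sv; have [[t0 St0]|S0] := pselect (exists t, S t != 0).
  have [s Ss smin] := series_has_min iS St0.
  by move: Sv; rewrite (pval_min Ss smin) => -[<-].
suff : pval S = +oo%E by rewrite Sv.
by apply/pval_infty => t; apply: contra_notP S0 => St; exists t; apply/eqP.
Qed.

Lemma series_gap S v : is_series S ->
  exists2 c, 0 < c & forall t, S t != 0 -> v < t -> v + c <= t.
Proof.
move=> [_ fin]; pose A := [set t | (S t != 0 /\ v < t) /\ t <= v + 1].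
have [[t0 At0]|A0] := pselect (exists t, A t); last first.
  exists 1 => // t St vt; apply: contrapT => /negP; rewrite -ltNge => tv.
  by apply: A0; exists t; split => //; apply: ltW.
have finA : finite_set A by apply: sub_finite_set (fin (v + 1)) => t [[]].
have [y [[_ vy] _] ymin] := finite_set_has_min finA At0.
exists (y - v) => [|t St vt]; first by rewrite subr_gt0.
rewrite subrKC; case: (leP t (v + 1)) => [tv|tv]; first exact: ymin.
by have := ymin _ At0; move: At0 => [_ t0v]; lra.
Qed.

Lemma dotmD e (m1 m2 : 'X_{1..n}) : dotm e (m1 + m2)%MM = dotm e m1 + dotm e m2.
Proof. by rewrite /dotm -big_split; apply: eq_bigr => i _; rewrite mnmDE natrD mulrDr. Qed.

Lemma dotmZ (c : R) e (m : 'X_{1..n}) : dotm (fun i => c * e i) m = c * dotm e m.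
Proof. by rewrite /dotm mulr_sumr; apply: eq_bigr => i _; rewrite mulrA. Qed.

Definition wt_ge e p (a : R) := forall m, m \in msupp p -> a <= dotm e m.
Definition wt_gt e p (a : R) := forall m, m \in msupp p -> a < dotm e m.

(* [a] is the valuation of [p(p^e x)], the least [e]-weight of a monomial of [p] *)
Definition is_wval e p (a : R) := wt_ge e p a /\ exists2 m, m \in msupp p & dotm e m = a.

Lemma msupp_neq_nil p : p != 0 -> exists m, m \in msupp p.
Proof. by rewrite -msupp_eq0; case: (msupp p) => [//|m s] _; exists m; rewrite mem_head. Qed.

Lemma wval_exists e p : p != 0 -> exists a, is_wval e p a.
Proof.
move=> /msupp_neq_nil[m0 m0p].
have [_ /mapP[m mp ->] mmin] := seq_has_min (map_f (dotm e) m0p).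
by exists (dotm e m); split=> [k kp|]; [apply: mmin; apply: map_f | exists m].
Qed.

Lemma wval_uniq e p a b : is_wval e p a -> is_wval e p b -> a = b.
Proof.
move=> [ga [ma pma ea]] [gb [mb pmb eb]].
by apply/le_anti; rewrite -eb ga //= eb -ea gb.
Qed.

Lemma wt_geM e p q a b : wt_ge e p a -> wt_ge e q b -> wt_ge e (p * q) (a + b).
Proof.
move=> gp gq m /msuppM_le /allpairsP[[m1 m2] /= [m1p m2q ->]].
by rewrite dotmD lerD ?gp ?gq.
Qed.

Lemma wt_gtM e p q a b : wt_ge e p a -> wt_gt e q b -> wt_gt e (p * q) (a + b).
Proof.
move=> gp gq m /msuppM_le /allpairsP[[m1 m2] /= [m1p m2q ->]].
by rewrite dotmD ler_ltD ?gp ?gq.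
Qed.

Definition wpart (P : pred 'X_{1..n}) p := \sum_(m <- msupp p | P m) p@_m *: 'X_[m].

Lemma mcoeff_wpart P p k : (wpart P p)@_k = if P k then p@_k else 0.
Proof.
rewrite /wpart raddf_sum /=.
under eq_bigr => m _ do rewrite mcoeffZ mcoeffX.
rewrite big_mkcond /=; case kp: (k \in msupp p).
  rewrite (bigD1_seq k) ?msupp_uniq //= eqxx mulr1 big1 ?addr0 //.
  by move=> m /negbTE; rewrite eq_sym => ->; rewrite mulr0 if_same.
rewrite big1_seq => [|m /andP[_ mp]]; last first.
  by case: eqP => [km|]; [move: kp; rewrite -km mp | rewrite mulr0 if_same].
by move/negbT: kp; rewrite -mcoeff_eq0 => /eqP->; rewrite if_same.
Qed.

Lemma wval_split e p a : is_wval e p a -> exists p0 p1,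
  [/\ p = p0 + p1, p0 != 0, {in msupp p0, forall m, dotm e m = a} & wt_gt e p1 a].
Proof.
move=> [gp [m mp ma]]; pose p0 := wpart (fun k => dotm e k == a) p.
exists p0, (p - p0); split; first by rewrite addrC subrK.
- apply/eqP => /(congr1 (mcoeff m)); rewrite mcoeff_wpart ma eqxx mcoeff0.
  by apply/eqP; rewrite -mcoeff_msupp.
- move=> k; rewrite mcoeff_msupp mcoeff_wpart.
  by case: (dotm e k =P a) => // _; rewrite eqxx.
move=> k; rewrite mcoeff_msupp mcoeffB mcoeff_wpart.
case: (dotm e k =P a) => [_|ka]; first by rewrite subrr eqxx.
by rewrite subr0 -mcoeff_msupp => kp; rewrite lt_neqAle eq_sym gp // andbT; apply/eqP.
Qed.

Lemma wvalM e p q a b : is_wval e p a -> is_wval e q b -> is_wval e (p * q) (a + b).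
Proof.
move=> vp vq; split; first exact: wt_geM vp.1 vq.1.
have [p0 [p1 [-> p00 p0a p1a]]] := wval_split vp.
have [q0 [q1 [Eq q00 q0b q1b]]] := wval_split vq.
have p0ge : wt_ge e p0 a by move=> m /p0a ->.
have [k kpq] := msupp_neq_nil (mulf_neq0 p00 q00).
have ka : dotm e k = a + b.
  by move: kpq => /msuppM_le /allpairsP[[m1 m2] /= [m1p m2q ->]]; rewrite dotmD p0a ?q0b.
have coef0 X : wt_gt e X (a + b) -> X@_k = 0.
  by move=> gX; apply/eqP; rewrite mcoeff_eq0; apply/negP => /gX; rewrite ka ltxx.
exists k => //; rewrite mcoeff_msupp mulrDl [in p0 * q]Eq mulrDr !mcoeffD.
rewrite (coef0 _ (wt_gtM p0ge q1b)) [p1 * q]mulrC (coef0 (q * p1)).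
  by rewrite !addr0 -mcoeff_msupp.
by rewrite addrC; apply: wt_gtM vq.1 p1a.
Qed.

Lemma wvalN e p a : is_wval e p a -> is_wval e (- p) a.
Proof.
have memN : msupp (- p) =i msupp p := perm_mem (msuppN p).
by move=> [gp [m mp ma]]; split=> [k|]; [rewrite memN; apply: gp | exists m; rewrite ?memN].
Qed.

Lemma wvalZ e p a (c : R) : 0 < c -> is_wval e p a -> is_wval (fun i => c * e i) p (c * a).
Proof.
move=> c0 [gp [m mp ma]]; split=> [k kp|]; last by exists m; rewrite // dotmZ ma.
by rewrite dotmZ ler_pM2l // gp.
Qed.

Lemma psubst_neq0 e q s : psubst e q s != 0 <-> exists2 m, m \in msupp q & dotm e m = s.
Proof.
rewrite /psubst tofrac_eq0 -/(wpart _ q); split.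
  move=> /msupp_neq_nil[m]; rewrite mcoeff_msupp mcoeff_wpart.
  case: (dotm e m =P s) => [ms qm|_]; last by rewrite eqxx.
  by exists m; rewrite ?mcoeff_msupp.
move=> [m mq ms]; apply/eqP => /(congr1 (mcoeff m)).
by rewrite mcoeff_wpart ms eqxx mcoeff0; apply/eqP; rewrite -mcoeff_msupp.
Qed.

Lemma psubst_wt_ge e q a s : wt_ge e q a -> psubst e q s != 0 -> a <= s.
Proof. by move=> gq /psubst_neq0[m /gq + <-]. Qed.

Lemma psubst_wval_neq0 e q b : is_wval e q b -> psubst e q b != 0.
Proof. by move=> [_ [m mq mb]]; apply/psubst_neq0; exists m. Qed.

Definition wsupp e q := undup [seq dotm e m | m <- msupp q].

Lemma psubst_supp e q s : psubst e q s != 0 -> s \in wsupp e q.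
Proof. by move/psubst_neq0 => [m mq <-]; rewrite mem_undup; apply: map_f. Qed.

Lemma smulE S T (D : seq R) s : uniq D -> (forall d, T d != 0 -> d \in D) ->
  smul S T s = \sum_(d <- D) S (s - d) * T d.
Proof.
move=> uD TD; have sK d : s - (s - d) = d by rewrite opprB addrC subrK.
rewrite /smul fsbig_supp (fsbig_fwiden [seq s - d | d <- D]).
- by rewrite big_map; apply: eq_bigr => d _; rewrite sK.
- move=> t [/= St /eqP STt]; apply/mapP; exists (s - t); rewrite ?sK //.
  by apply: TD; apply: contra STt => /eqP ->; rewrite mulr0.
- by rewrite map_inj_uniq // => x y /= /addrI /oppr_inj.
- move=> t [_ /= STt]; have [St|St] := eqVneq (S t) 0; first by rewrite St mul0r.
  by apply: contrapT => STt0; apply: STt; split.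
Qed.

Section ProductLeadingTerm.
Variables (S T : series) (D : seq R) (s0 b : R).
Hypotheses (uD : uniq D) (TD : forall d, T d != 0 -> d \in D).
Hypotheses (Sge : forall t, S t != 0 -> s0 <= t) (Tge : forall d, T d != 0 -> b <= d).
Hypothesis Tb : T b != 0.

Lemma smul_lead s : s <= s0 + b -> smul S T s = if s == s0 + b then S s0 * T b else 0.
Proof.
move=> sle; rewrite (smulE _ _ uD TD) (bigD1_seq b) ?TD //= big1 ?addr0 => [|d db].
  case: eqP => [->|sne]; first by rewrite addrK.
  have sb : s < s0 + b by rewrite lt_neqAle sle andbT; apply/eqP.
  have [->|/Sge] := eqVneq (S (s - b)) 0; first by rewrite mul0r.
  by move=> *; exfalso; lra.
have [Td0|Td] := eqVneq (T d) 0; first by rewrite Td0 mulr0.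
have : b < d by rewrite lt_neqAle eq_sym db Tge.
have [->|/Sge] := eqVneq (S (s - d)) 0; first by rewrite mul0r.
by move=> *; exfalso; lra.
Qed.

End ProductLeadingTerm.

Lemma quotient_val e S p q a b : is_series S -> is_wval e p a -> is_wval e q b ->
  smul S (psubst e q) = psubst e p -> S (a - b) != 0 /\ forall t, S t != 0 -> a - b <= t.
Proof.
move=> iS vp vq eqS; have Tb := psubst_wval_neq0 vq; have Pa := psubst_wval_neq0 vp.
have TD d : psubst e q d != 0 -> d \in wsupp e q by apply: psubst_supp.
have uD : uniq (wsupp e q) by apply: undup_uniq.
have [t0 St0] : exists t0, S t0 != 0.
  apply: contrapT => S0; move: Pa; rewrite -eqS (smulE _ _ uD TD) big1 ?eqxx // => d _.
  by rewrite (_ : S _ = 0) ?mul0r //; apply: contra_notP S0 => Sd; exists (a - d); apply/eqP.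
have [s0 Ss0 Sge] := series_has_min iS St0.
have lead s : s <= s0 + b ->
    smul S (psubst e q) s = if s == s0 + b then S s0 * psubst e q b else 0.
  exact: (smul_lead uD TD Sge (fun d => psubst_wt_ge vq.1)).
have a_le : a <= s0 + b.
  apply: (psubst_wt_ge vp.1); rewrite -eqS (lead _ (lexx _)) (eqxx (s0 + b)).
  exact: mulf_neq0 Ss0 Tb.
suff -> : a - b = s0 by [].
apply/eqP; rewrite subr_eq; apply: contraNT Pa => ne.
by rewrite -eqS (lead _ a_le) (negbTE ne) (eqxx 0).
Qed.

Lemma psubst_finite e q : finite_set [set s | psubst e q s != 0].
Proof. by apply: sub_finite_set (finite_seq (wsupp e q)) => s /psubst_supp. Qed.

Lemma psubst_bounded e q : exists c, forall s, psubst e q s != 0 -> c <= s.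
Proof.
have [->|q0] := eqVneq q 0.
  by exists 0 => s /psubst_neq0[m]; rewrite msupp0.
by have [a [ga _]] := wval_exists e q0; exists a => s; apply: psubst_wt_ge.
Qed.

Section QuotientSeries.
Variables (e : 'I_n -> R) (p q : Pol) (b c : R).
Hypotheses (vq : is_wval e q b) (Uge : forall s, psubst e p s != 0 -> c <= s).
Local Notation T := (psubst e q).
Local Notation U := (psubst e p).
Let D := [seq d <- wsupp e q | d != b].

Lemma higher_gt d : d \in D -> b < d.
Proof.
rewrite mem_filter mem_undup => /andP[db /mapP[m mq dm]].
by rewrite lt_neqAle eq_sym db dm vq.1.
Qed.

(* The coefficient of [S * T = U] at [g + b], solved for [S g]; the other terms only
   involve coefficients of [S] below [g], as [D] lists the exponents of [T] above [b]. *)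
Definition quot_step (S : series) : series := fun g =>
  (U (g + b) - \sum_(d <- D) S (g + b - d) * T d) / T b.

Definition quot_approx (N : nat) : series := iter N quot_step (fun _ => 0).

Lemma quot_step_ext S1 S2 g :
  (forall d, d \in D -> S1 (g + b - d) = S2 (g + b - d)) -> quot_step S1 g = quot_step S2 g.
Proof. by move=> eqS; congr ((_ - _) / _); apply: eq_big_seq => d /eqS ->. Qed.

Lemma quot_approx_low N g : g + b < c -> quot_approx N g = 0.
Proof.
elim: N g => [//|N IH] g gbc /=; rewrite /quot_step.
have -> : U (g + b) = 0 by apply: contraTeq gbc => /Uge; rewrite -leNgt.
rewrite big1_seq ?subr0 ?mul0r // => d /andP[_ dD].
by rewrite IH ?mul0r //; have := higher_gt dD; lra.
Qed.

Let gap := \big[Num.min/1]_(d <- D) (d - b).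

Lemma gap_gt0 : 0 < gap.
Proof.
rewrite /gap big_seq; apply: (big_ind (fun x => 0 < x)) => // [x y|d /higher_gt].
  by rewrite lt_min => -> ->.
by rewrite subr_gt0.
Qed.

Lemma gap_le d : d \in D -> gap <= d - b.
Proof. by move=> dD; apply: ge_bigmin_seq. Qed.

Lemma quot_approx_stable N k g : g + b < c + N%:R * gap ->
  quot_approx (N + k) g = quot_approx N g.
Proof.
have step_stable M x : x + b < c + M%:R * gap -> quot_approx M.+1 x = quot_approx M x.
  elim: M x => [|M IH] x; first by rewrite mul0r addr0 => xbc; rewrite !quot_approx_low.
  move=> hbc; apply: quot_step_ext => d dD; apply: IH.
  have := gap_le dD; have := higher_gt dD; move: hbc; rewrite -natr1 mulrDl mul1r; lra.
move=> gbc; elim: k => [|k IH]; first by rewrite addn0.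
rewrite addnS step_stable ?IH //; apply: (lt_le_trans gbc).
by rewrite lerD2l ler_pM2r ?gap_gt0 // ler_nat leq_addr.
Qed.

Definition quot_depth (g : R) : nat := Num.bound ((g + b - c) / gap).

Lemma quot_depth_spec g : g + b < c + (quot_depth g)%:R * gap.
Proof.
rewrite -ltrBlDl -ltr_pdivrMr ?gap_gt0 //.
have [ge0|lt0] := leP 0 ((g + b - c) / gap); first exact: archi_boundP.
by apply: lt_le_trans lt0 _.
Qed.

Definition quot : series := fun g => quot_approx (quot_depth g) g.

Lemma quotE N g : g + b < c + N%:R * gap -> quot g = quot_approx N g.
Proof.
move=> gbc; rewrite /quot; case: (leqP N (quot_depth g)) => [le|/ltnW le].
  by rewrite -(subnKC le) quot_approx_stable.
by rewrite -(subnKC le) quot_approx_stable // quot_depth_spec.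
Qed.

Lemma quot_fix g : quot g = quot_step quot g.
Proof.
rewrite (quotE (N := (quot_depth g).+1)); last first.
  apply: lt_le_trans (quot_depth_spec g) _.
  by rewrite lerD2l ler_pM2r ?gap_gt0 // ler_nat.
apply: quot_step_ext => d dD; rewrite (quotE (N := quot_depth g)) //.
by have := quot_depth_spec g; have := higher_gt dD; lra.
Qed.

Lemma smul_quot : smul quot T = U.
Proof.
apply: funext => s; have TD d : T d != 0 -> d \in wsupp e q by apply: psubst_supp.
rewrite (smulE _ _ (undup_uniq _) TD) (bigD1_seq b) ?TD ?(psubst_wval_neq0 vq) ?undup_uniq //=.
rewrite -big_filter -/D quot_fix /quot_step !(subrK b) divfK ?(psubst_wval_neq0 vq) //.
exact: subrK.
Qed.

Lemma quot_approx_finite N : finite_set [set g | quot_approx N g != 0].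
Proof.
elim: N => [|N IH]; first by apply: sub_finite_set (finite_set0 R) => g /=; rewrite eqxx.
apply: (@sub_finite_set _ _ ([set u - b | u in [set u | U u != 0]] `|`
  [set t + (d - b) | t in [set t | quot_approx N t != 0] & d in [set` D]])); last first.
  by rewrite finite_setU; split; [apply/finite_image/psubst_finite | apply: finite_image2].
move=> g /=; rewrite /quot_step; have [Ug|Ug _] := eqVneq (U (g + b)) 0; last first.
  by left; exists (g + b); rewrite ?addrK.
rewrite Ug sub0r => Sg; right; apply: contrapT => noS; move: Sg.
rewrite big1_seq ?oppr0 ?mul0r ?(eqxx 0) // => d /andP[_ dD].
have [->|Sd] := eqVneq (quot_approx N (g + b - d)) 0; first by rewrite mul0r.
by case: noS; exists (g + b - d); last by exists d => //; rewrite addrA subrK addrK.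
Qed.

Lemma quot_series : is_series quot.
Proof.
split=> [|B].
  by exists (c - b) => t; apply: contraNle => tc; rewrite /quot quot_approx_low //; lra.
apply: sub_finite_set (quot_approx_finite (quot_depth B)) => t [Qt tB].
change (quot_approx (quot_depth B) t != 0).
suff <- : quot t = quot_approx (quot_depth B) t by [].
by apply: quotE; have := quot_depth_spec B; lra.
Qed.

End QuotientSeries.

Lemma quotient_exists e p q : q != 0 ->
  exists S, is_series S /\ smul S (psubst e q) = psubst e p.
Proof.
move=> q0; have [b vq] := wval_exists e q0; have [c Uge] := psubst_bounded e p.
by exists (quot e p q b c); split; [exact: quot_series | exact: smul_quot].
Qed.

Lemma tofrac_div_repr (D : idomainType) (r : {fraction D}) :
  exists x y, y != 0 /\ r = tofrac x / tofrac y.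
Proof.
elim/quotW: r => x; exists x.1, x.2; split; first exact: denom_ratioP.
rewrite /GRing.inv /GRing.mul /= !piE; apply/eqmodP.
rewrite /= FracField.equivfE /FracField.mulf /FracField.invf.
rewrite !numden_Ratio ?oner_eq0 ?mulf_neq0 ?denom_ratioP //.
rewrite mul1r mulr1 mulrC.
- exact: eqxx.
all: exact: oner_neq0.
Qed.

Lemma tofrac_div_eq (D : idomainType) (x y x' y' : D) : y != 0 -> y' != 0 ->
  tofrac x / tofrac y = tofrac x' / tofrac y' :> {fraction D} -> x * y' = x' * y.
Proof.
rewrite -!(tofrac_eq0 (R := D)) => y0 y'0 eqf; apply/eqP; rewrite -(tofrac_eq (R := D)).
by rewrite !tofracM -[tofrac x](divfK y0) eqf mulrAC divfK // mulrC.
Qed.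

Definition is_quot e (r : RF) : set series := [set S | is_series S /\ exists p q,
  q != 0 /\ r = tofrac p / tofrac q /\ smul S (psubst e q) = psubst e p].

Lemma rsubst_quot e r : is_quot e r (rsubst e r).
Proof.
have [p [q [q0 ->]]] := tofrac_div_repr r.
have [S [iS eqS]] := quotient_exists e p q0.
by apply: (@xgetI _ (fun _ => 0) (is_quot e _) S); split=> //; exists p, q.
Qed.

Lemma rsubst_val e r p q a b : r != 0 -> q != 0 -> r = tofrac p / tofrac q ->
  is_wval e p a -> is_wval e q b ->
  rsubst e r (a - b) != 0 /\ forall t, rsubst e r t != 0 -> a - b <= t.
Proof.
move=> r0 q0 rE vp vq; have [iS [p' [q' [q'0 [rE' eqS]]]]] := rsubst_quot e r.
have p'0 : p' != 0 by apply: contra_neq r0 => p'0; rewrite rE' p'0 tofrac0 mul0r.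
have [a' va'] := wval_exists e p'0; have [b' vb'] := wval_exists e q'0.
have cross := tofrac_div_eq q'0 q0 (etrans (esym rE') rE).
have ab : a + b' = a' + b by apply: wval_uniq (wvalM vp vb') _; rewrite -cross; apply: wvalM.
by rewrite (_ : a - b = a' - b'); [exact: quotient_val eqS | lra].
Qed.

Lemma rsubst_weight0 e r s : r != 0 -> (forall i, e i = 0) ->
  rsubst e r s != 0 -> 0 <= s.
Proof.
move=> r0 e0; have [iS [p [q [q0 [rE eqS]]]]] := rsubst_quot e r.
have p0 : p != 0 by apply: contra_neq r0 => p0; rewrite rE p0 tofrac0 mul0r.
have wval0 (x : Pol) : x != 0 -> is_wval e x 0.
  move=> /msupp_neq_nil[m mx]; have dotm0 k : dotm e k = 0.
    by rewrite /dotm big1 // => i _; rewrite e0 mul0r.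
  by split=> [k _|]; [rewrite dotm0 | exists m].
have [_] := quotient_val iS (wval0 p p0) (wval0 q q0) eqS.
by rewrite subr0; apply.
Qed.

Lemma norminf_ge e i : `|e i| <= norminf e.
Proof. by rewrite /norminf (bigD1 i) //= le_max lexx. Qed.

Lemma norminfZ (c : R) e : 0 <= c -> norminf (fun i => c * e i) = c * norminf e.
Proof.
move=> c0; apply: (big_ind2 (fun x y => x = c * y)); first by rewrite mulr0.
  by move=> x1 y1 x2 y2 -> ->; rewrite maxr_pMr.
by move=> i _; rewrite normrM ger0_norm.
Qed.

Lemma deg_ge e r s : (exists i, e i != 0) -> rsubst e r s != 0 ->
  (- (s / norminf e)%:E <= deg R r)%E.
Proof.
move=> [i ei] rs; have e0 : 0 < norminf e by apply: lt_le_trans (norminf_ge e i); rewrite normr_gt0.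
rewrite /deg leeN2; apply: le_trans (_ : deg_eps e r * ((norminf e)^-1)%:E <= _)%E.
  by apply: ereal_inf_lbound; exists e => //; exists i.
rewrite EFinM; apply: lee_wpmul2r; first by rewrite lee_fin invr_ge0 ltW.
exact: pval_le.
Qed.

Lemma in_Rx_tail_bound h v : in_Rx h -> pval h = v%:E ->
  exists M, forall t, h t != 0 -> v < t -> forall e s,
    rsubst e (h t) s != 0 -> - (M * (t - v) * norminf e) <= s.
Proof.
move=> [_ supSS] hv; move: supSS; rewrite hv; set SS := (X in ereal_sup X) => supSS.
have [M SSM] : exists M, forall y, SS y -> (y <= M%:E)%E.
  exists (fine (ereal_sup SS)) => y /ereal_sup_ubound.
  by case: (ereal_sup SS) supSS => [r _ //| //| _ /= yoo]; apply: le_trans yoo (leNye _).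
exists M => t ht vt e s rs; have tv0 : 0 < t - v by rewrite subr_gt0.
have [[i ei]|e0] := pselect (exists i, e i != 0); last first.
  have e0' i : e i = 0 by apply: contra_notP e0 => ei; exists i; apply/eqP.
  have n0 : norminf e = 0.
    rewrite -(mul0r (norminf e)) -norminfZ //; congr norminf.
    by apply: funext => j; rewrite e0' mulr0.
  by rewrite n0 mulr0 oppr0; apply: rsubst_weight0 rs.
have k0 : 0 < norminf e by apply: lt_le_trans (norminf_ge e i); rewrite normr_gt0.
have : (- (s / norminf e) / (t - v) <= M)%R.
  rewrite -lee_fin EFinM; apply: le_trans (SSM _ _); last by exists t => //; rewrite hv lte_fin.
  apply: lee_wpmul2r; first by rewrite lee_fin invr_ge0 ltW.
  by rewrite EFinN; apply: deg_ge rs; exists i.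
by rewrite ler_pdivrMr // -mulNr ler_pdivrMr //; lra.
Qed.

Lemma small_mul (A c : R) : 0 < c -> exists2 d, 0 < d & forall eps, 0 <= eps -> eps < d -> eps * A < c.
Proof.
move=> c0; have A1 : 0 < `|A| + 1 by rewrite ltr_wpDl.
exists (c / (`|A| + 1)) => [|eps e0 ed]; first by rewrite divr_gt0.
apply: le_lt_trans (_ : eps * (`|A| + 1) < c); last by rewrite -ltr_pdivlMr.
by rewrite ler_wpM2l // (le_trans (ler_norm A)) // lerDl.
Qed.

Lemma subst_single_term e h v s : h v != 0 ->
  (forall t, h t != 0 -> t != v -> rsubst e (h t) (s - t) = 0) ->
  subst e h s = rsubst e (h v) (s - v).
Proof.
move=> hv tail; rewrite /subst -(@fsbig_widen _ _ _ _ [set v]).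
- exact: fsbig_set1.
- by move=> t /= ->.
- by move=> t [/= ht tv]; apply: tail => //; apply/eqP.
Qed.

Lemma pval_shift h Z v c s0 : s0 < c -> (forall s, s < v + c -> h s = Z (s - v)) ->
  Z s0 != 0 -> (forall t, Z t != 0 -> s0 <= t) -> pval h = (v + s0)%:E.
Proof.
move=> s0c hZ Zs0 Zmin; apply: pval_min => [|s].
  rewrite hZ; last lra.
  by rewrite (_ : v + s0 - v = s0) //; lra.
case: (ltP s (v + c)) => sv; last by lra.
by rewrite hZ; [move=> /Zmin; lra | exact: sv].
Qed.

Lemma subst_lead h v : in_Rx h -> pval h = v%:E -> exists M c, 0 < c /\
  forall e, M * norminf e <= 1 / 2 -> forall s, s < v + c ->
    subst e h s = rsubst e (h v) (s - v).
Proof.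
move=> ih hv; have [hv0 hmin] := pval_attained ih.1 hv.
have [M Mbound] := in_Rx_tail_bound ih hv; have [c c0 gap] := series_gap v ih.1.
exists M, (c / 2); split=> [|e eM s sv]; first by rewrite divr_gt0.
apply: subst_single_term hv0 _ => t ht tv; have vt : v < t by rewrite lt_neqAle eq_sym tv hmin.
apply: contraTeq sv => /(Mbound t ht vt) hb; rewrite -leNgt.
have : M * norminf e * (t - v) <= 1 / 2 * (t - v) by rewrite ler_wpM2r // subr_ge0 ltW.
by rewrite mulrAC; have := gap t ht vt; lra.
Qed.

Lemma pval_subst_small h v u p q a b : in_Rx h -> pval h = v%:E -> q != 0 ->
  h v = tofrac p / tofrac q -> is_wval u p a -> is_wval u q b ->
  exists2 d, 0 < d & forall eps, 0 < eps -> eps < d ->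
    pval (subst (fun i => eps * u i) h) = (v + eps * (a - b))%:E.
Proof.
move=> ih hv q0 hvE vp vq; have [hv0 _] := pval_attained ih.1 hv.
have [M [c [c0 lead]]] := subst_lead ih hv.
have half_gt0 : 0 < 1 / 2 :> R by rewrite divr_gt0.
have [d1 d10 small1] := small_mul (M * norminf u) half_gt0.
have [d2 d20 small2] := small_mul (a - b) c0.
exists (Num.min d1 d2); first by rewrite lt_min d10 d20.
move=> eps e0; rewrite lt_min => /andP[ed1 ed2].
have eM : M * norminf (fun i => eps * u i) <= 1 / 2.
  rewrite norminfZ; last exact: ltW.
  by rewrite mulrCA; apply/ltW/small1 => //; apply: ltW.
have [Z0 Zmin] := rsubst_val hv0 q0 hvE (wvalZ e0 vp) (wvalZ e0 vq).
rewrite mulrBr; apply: pval_shift (lead _ eM) Z0 Zmin.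
by rewrite -mulrBr small2 //; apply: ltW.
Qed.

Lemma pval_sadd S T v : is_series S -> is_series T -> pval S = v%:E -> pval T = v%:E ->
  S v + T v != 0 -> pval (sadd S T) = v%:E.
Proof.
move=> iS iT Sv Tv STv; apply: pval_min => [|t]; first exact: STv.
rewrite leNgt; apply: contra => tv; rewrite /sadd.
have [_ Smin] := pval_attained iS Sv; have [_ Tmin] := pval_attained iT Tv.
have -> : S t = 0 by apply: contraTeq tv => /Smin; rewrite -leNgt.
have -> : T t = 0 by apply: contraTeq tv => /Tmin; rewrite -leNgt.
by rewrite /sadd addr0 (eqxx 0).
Qed.

Lemma lead_sum_neq0 (f g : series) v u (d : R) :
  in_Rx f -> in_Rx g -> pval f = v%:E -> pval g = v%:E -> 0 < d ->
  (forall eps, 0 < eps -> eps < d ->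
    (pval (subst (fun i => (eps * u i)%R) f) < pval (subst (fun i => (eps * u i)%R) g))%E) ->
  f v + g v != 0.
Proof.
move=> iF iG Ef Eg d0 hu; apply/negP => /eqP fg0.
have [fv0 _] := pval_attained iF.1 Ef.
have [p [q [q0 fvE]]] := tofrac_div_repr (f v).
have p0 : p != 0 by apply: contra_neq fv0 => p0; rewrite fvE p0 tofrac0 mul0r.
have [a va] := wval_exists u p0; have [b vb] := wval_exists u q0.
have gvE : g v = tofrac (- p) / tofrac q.
  rewrite tofracN mulNr -fvE; apply/eqP; rewrite -addr_eq0 addrC fg0; exact: eqxx.
have [d1 d10 valf] := pval_subst_small iF Ef q0 fvE va vb.
have [d2 d20 valg] := pval_subst_small iG Eg q0 gvE (wvalN va) vb.
pose m := Num.min d (Num.min d1 d2).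
have m0 : 0 < m by rewrite !lt_min d0 d10 d20.
have md : m <= d by rewrite ge_min lexx.
have md1 : m <= d1 by rewrite !ge_min lexx orbT.
have md2 : m <= d2 by rewrite !ge_min lexx !orbT.
have [e0 ed ed1 ed2] : [/\ 0 < m / 2, m / 2 < d, m / 2 < d1 & m / 2 < d2] by split; lra.
by have := hu _ e0 ed; rewrite (valf _ e0 ed1) (valg _ e0 ed2) ltxx.
Qed.

End PuiseuxValuation.

Unset Implicit Arguments.

Theorem corollary2p4 (R : realType) (n : nat) (K : fieldType)
    (f g : series R n K) :
  in_Rx f -> in_Rx g ->
  pval f = pval g ->
  (exists u : 'I_n -> R, exists d : R, 0 < d /\
     forall eps : R, 0 < eps -> eps < d ->
       (pval (subst (fun i => (eps * u i)%R) f) < pval (subst (fun i => (eps * u i)%R) g))%E) ->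
  pval (sadd f g) = pval f /\ lc (sadd f g) = lc f + lc g.
Proof.
move=> iF iG fg [u [d [d0 hu]]].
suff val_fg : pval (sadd f g) = pval f by split=> [|]; [exact: val_fg | rewrite /lc val_fg -fg].
have [Ef|[v Ef]] := pval_finite_or_infty iF.1; have Eg := etrans (esym fg) Ef.
  have /pval_infty f0 := Ef; have /pval_infty g0 := Eg.
  by rewrite [RHS]Ef; apply/pval_infty => t; rewrite /sadd f0 g0 addr0.
rewrite [RHS]Ef; apply: (pval_sadd iF.1 iG.1 Ef Eg).
exact: lead_sum_neq0 Ef Eg d0 hu.
Qed.
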